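(* Let $G=(V,E)$ be an undirected, unweighted, 2-edge-connected graph and let $T$ be a spanning tree of $G$. Then for every edge $e$ of $T$ there exists a set $C\subseteq S_e$ with $|C|\le 6$ such that for every swap edge $f\in S_e$, $C$ contains an edge that is critical for $f$.
   Context: $d_T(u,v)$ denotes the number of edges on the unique path between $u$ and $v$ in the tree $T$. For an edge $e$ of $T$, let $X$ and $Y=V\setminus X$ be the vertex sets of the two connected components of $T-e$. The set $S_e$ of swap edges of $e$ consists of all edges of $E\setminus\{e\}$ with one endpoint in $X$ and the other in $Y$; each swap edge is written $(u,v)$ with $u\in X$, $v\in Y$. For $f=(x,y)\in S_e$, let $T_{e/f}$ be the tree obtained from $T$ by replacing $e$ with $f$; for $g=(a,b)\in S_e$ one has $d_{T_{e/f}}(a,b)=d_T(x,a)+1+d_T(b,y)$. An edge $g=(a,b)\in S_e$ is called critical for $f=(x,y)\in S_e$ if $$d_T(x,a)+1+d_T(b,y)=\max_{(a'',b'')\in S_e}\big(d_T(x,a'')+1+d_T(b'',y)\big),$$ i.e. $g$ attains the maximum stretch of $T_{e/f}$ over the swap edges of $e$. *)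

From mathcomp Require Import all_boot.
Set Implicit Arguments. Unset Strict Implicit. Unset Printing Implicit Defensive.

(* A simple undirected graph on a finite vertex type V is a symmetric,
   irreflexive relation g : rel V (g u v means {u,v} is an edge). *)
Definition simple_graph (V : finType) (g : rel V) : Prop :=
  symmetric g /\ irreflexive g.

Definition rem_edge (V : finType) (r : rel V) (a b : V) : rel V :=
  [rel u v | r u v && ~~ (((u == a) && (v == b)) || ((u == b) && (v == a)))].

Definition connected_graph (V : finType) (g : rel V) : Prop :=
  forall u v, connect g u v.

Definition two_edge_connected (V : finType) (g : rel V) : Prop :=
  connected_graph g /\ forall a b, g a b -> connected_graph (rem_edge g a b).

Definition acyclic (V : finType) (t : rel V) : Prop :=
  forall (x : V) (p : seq V), path t x p -> uniq (x :: p) -> 2 <= size p ->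
    ~~ t (last x p) x.

Definition spanning_tree (V : finType) (g t : rel V) : Prop :=
  [/\ simple_graph t, subrel t g, connected_graph t & acyclic t].

Definition walk_n (V : finType) (t : rel V) (u v : V) (n : nat) : bool :=
  [exists p : n.-tuple V, path t u p && (last u p == v)].

(* d_t(u,v): the number of edges of a shortest path from u to v in t; in a
   tree this is the number of edges of the unique u-v path.  (Equals #|V| if
   v is unreachable, which does not happen for a spanning tree.) *)
Definition dist (V : finType) (t : rel V) (u v : V) : nat :=
  find (walk_n t u v) (iota 0 #|V|).

(* For the tree edge e = (x0,y0): X = component of x0 in t - e, Y = V \ X. *)
Definition sideX (V : finType) (t : rel V) (x0 y0 : V) : {set V} :=
  [set w | connect (rem_edge t x0 y0) x0 w].

(* Swap edges S_e, written (u,v) with u in X, v in Y. *)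
Definition swap_edges (V : finType) (g t : rel V) (x0 y0 : V) : {set V * V} :=
  [set f | [&& g f.1 f.2, f.1 \in sideX t x0 y0, f.2 \notin sideX t x0 y0
             & f != (x0, y0)]].

Definition stretch (V : finType) (t : rel V) (f h : V * V) : nat :=
  dist t f.1 h.1 + 1 + dist t h.2 f.2.

Definition critical (V : finType) (g t : rel V) (x0 y0 : V) (f h : V * V) : Prop :=
  stretch t f h = \max_(h' in swap_edges g t x0 y0) stretch t f h'.

From mathcomp Require Import all_boot zify.
Set Implicit Arguments. Unset Strict Implicit. Unset Printing Implicit Defensive.

(* Up to symmetry, the stretch of a swap edge h for f = (x, y) is D(f, h) + 1,
   where D is the sum of the tree distances between first and between second
   endpoints.  A tree metric is 0-hyperbolic: its Gromov products at any base
   point, computed as lengths of common prefixes of root paths, form an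
   ultrametric.  For such a metric, take a D-diametral pair h1, h2 of swap
   edges and the swap edges h3, h4 farthest from the two "mixed corners"
   (h1.1, h2.2) and (h2.1, h1.2); a case analysis on the isosceles triangles of
   Gromov products shows that every D-farthest-point query is answered by one
   of h1, ..., h4.  So four critical edges suffice. *)

Section Distance.
Variables (V : finType) (t : rel V).
Hypothesis tsym : symmetric t.
Hypothesis tconn : connected_graph t.

Local Notation d := (dist t).

Lemma walk_nP u v n :
  reflect (exists p : seq V, [/\ path t u p, last u p = v & size p = n])
          (walk_n t u v n).
Proof.
apply: (iffP existsP) => [[p /andP[pp /eqP pl]] | [p [pp pl ps]]].
  by exists (val p); rewrite size_tuple.
have sp : size p == n by apply/eqP.
by exists (Tuple sp); rewrite /= pp pl eqxx.
Qed.

Lemma dist_le_size u v p : path t u p -> last u p = v -> d u v <= size p.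
Proof.
move=> pp pl; rewrite /dist; case: (ltnP (size p) #|V|) => Hp.
  rewrite leqNgt; apply/negP => /(before_find 0); rewrite nth_iota // add0n.
  by have -> : walk_n t u v (size p) by apply/walk_nP; exists p.
by apply: leq_trans (find_size _ _) _; rewrite size_iota.
Qed.

Lemma dist_shortest_path u v :
  exists p, [/\ path t u p, last u p = v & size p = d u v].
Proof.
have /connectP [p pp ->] := tconn u v.
case: (shortenP pp) => p' pp' up' _.
have sp : size p' < #|V| by have := max_card (mem (u :: p')); rewrite (card_uniqP up').
have hw : has (walk_n t u (last u p')) (iota 0 #|V|).
  by apply/hasP; exists (size p'); [rewrite mem_iota | apply/walk_nP; exists p'].
have := nth_find 0 hw; rewrite nth_iota; last by move: hw; rewrite has_find size_iota.
by rewrite add0n => /walk_nP.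
Qed.

Lemma dist_triangle u v w : d u w <= d u v + d v w.
Proof.
have [p [pp pl <-]] := dist_shortest_path u v.
have [q [qp ql <-]] := dist_shortest_path v w.
rewrite -size_cat; apply: dist_le_size; first by rewrite cat_path pp pl qp.
by rewrite last_cat pl.
Qed.

Lemma dist_eq0 u v : d u v = 0 -> u = v.
Proof. by have [[|? ?] [_ <- <-]] := dist_shortest_path u v. Qed.

Lemma dist_edge u v : t u v -> d u v <= 1.
Proof. by move=> tuv; apply: (@dist_le_size _ _ [:: v]); rewrite //= tuv. Qed.

Lemma dist_sym u v : d u v = d v u.
Proof.
suff le_d a b : d a b <= d b a by apply/eqP; rewrite eqn_leq !le_d.
have [p [pp pl <-]] := dist_shortest_path b a.
rewrite -pl -(size_belast b p) -size_rev; apply: dist_le_size.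
  by move: pp; rewrite rev_path; apply: sub_path => x y /=; rewrite tsym.
by case: (p) => //= x q; rewrite rev_cons last_rcons.
Qed.

End Distance.

Lemma dist0 (V : finType) (t : rel V) u : dist t u u = 0.
Proof. by apply/eqP; rewrite -leqn0 (@dist_le_size _ _ _ _ [::]). Qed.

Fixpoint lcp (T : eqType) (s1 s2 : seq T) : nat :=
  match s1, s2 with
  | x :: s1', y :: s2' => if x == y then (lcp s1' s2').+1 else 0
  | _, _ => 0
  end.

Section LongestCommonPrefix.
Variable T : eqType.
Implicit Types s : seq T.

Lemma lcpC s1 s2 : lcp s1 s2 = lcp s2 s1.
Proof. by elim: s1 s2 => [|x s1 IH] [|y s2] //=; rewrite eq_sym IH. Qed.

Lemma lcp_le_size s1 s2 : lcp s1 s2 <= size s1.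
Proof.
by elim: s1 s2 => [|x s1 IH] [|y s2] //=; case: ifP => // _; rewrite ltnS IH.
Qed.

Lemma lcp_id s : lcp s s = size s.
Proof. by elim: s => //= x s ->; rewrite eqxx. Qed.

Lemma take_lcp s1 s2 : take (lcp s1 s2) s1 = take (lcp s1 s2) s2.
Proof.
elim: s1 s2 => [|x s1 IH] [|y s2] //=; case: eqP => [->|] //=.
by rewrite IH.
Qed.

Lemma lcp_rcons s1 s2 x : lcp s1 s2 <= lcp (rcons s1 x) s2 <= (lcp s1 s2).+1.
Proof.
elim: s1 s2 => [|y s1 IH] [|z s2] //=; first by case: ifP.
by case: ifP => // _; rewrite !ltnS.
Qed.

Lemma lcp_min s1 s2 s3 : minn (lcp s1 s2) (lcp s2 s3) <= lcp s1 s3.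
Proof.
elim: s1 s2 s3 => [|x s1 IH] [|y s2] [|z s3] //=; rewrite ?minn0 ?min0n //.
case: (x =P y) => [exy|_]; case: (y =P z) => [eyz|_]; rewrite ?minn0 ?min0n //.
by rewrite exy eyz eqxx minnSS ltnS IH.
Qed.

End LongestCommonPrefix.

Section Tree.
Variables (V : finType) (t : rel V).
Hypothesis tsym : symmetric t.
Hypothesis tirr : irreflexive t.
Hypothesis tconn : connected_graph t.
Hypothesis tacyc : acyclic t.

Local Notation d := (dist t).
Local Notation cut u w := (connect (rem_edge t u w)).

Lemma rem_edge_sym u w : symmetric (rem_edge t u w).
Proof.
move=> a b; rewrite /rem_edge /= tsym.
by case: (a == u); case: (b == w); case: (a == w); case: (b == u).
Qed.

Lemma sub_rem_edge u w : subrel (rem_edge t u w) t.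
Proof. by move=> a b /andP[]. Qed.

Lemma tree_edge_bridge u w : t u w -> ~~ cut u w u w.
Proof.
move=> tuw; apply/negP => /connectP [p pp pl].
case: (shortenP pp) pl => p' pp' up' _ pl.
have tp' := sub_path (@sub_rem_edge u w) pp'.
case: p' pp' up' tp' pl => [|y [|z q]].
- by move=> _ _ _ /= eu; move: tuw; rewrite eu tirr.
- by move=> /= /andP[/andP[_ H] _] _ _ ey; rewrite -ey !eqxx in H.
- move=> _ up tp pl; have := tacyc tp up (isT : 2 <= size [:: y, z & q]).
  by rewrite -pl tsym tuw.
Qed.

Lemma path_cross_bridge u w p y : t u w -> ~~ cut u w u y -> path t y p ->
  cut u w u (last y p) ->
  exists p1 p2, [/\ p = p1 ++ u :: p2, last y p1 = w, path t y p1 & path t u p2].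
Proof.
move=> tuw; elim: p y => [|a p IH] y ny /=; first by move=> _ cy; rewrite cy in ny.
move=> /andP[tya pa] cl; case ca: (cut u w u a).
  have : ~~ rem_edge t u w y a.
    apply/negP => r; move/negP: ny; apply; apply: connect_trans ca _.
    by apply: connect1; rewrite rem_edge_sym.
  rewrite /rem_edge /= tya /= negbK => /orP[/andP[/eqP yu _]|/andP[/eqP yw /eqP au]].
    by rewrite yu connect0 in ny.
  by exists [::], p; rewrite -au yw.
have [p1 [p2 [-> l1 pp1 pp2]]] := IH a (negbT ca) pa cl.
by exists (a :: p1), p2; rewrite /= tya.
Qed.

Lemma dist_across_bridge u w y y' : t u w -> ~~ cut u w u y -> cut u w u y' ->
  d y w + 1 + d u y' <= d y y'.
Proof.
move=> tuw ny cy; have [p [pp pl <-]] := dist_shortest_path tconn y y'.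
rewrite -pl in cy; have [p1 [p2 [ep l1 pp1 pp2]]] := path_cross_bridge tuw ny pp cy.
have := dist_le_size pp1 l1.
have : d u y' <= size p2 by apply: dist_le_size => //; rewrite -pl ep last_cat.
rewrite ep size_cat /=; lia.
Qed.

Lemma dist_edge_neq r z z' : t z z' -> d r z != d r z'.
Proof.
move=> tzz; have := dist_sym tsym tconn z r; have := dist_sym tsym tconn z' r.
case c: (cut z z' z r).
  by have := dist_across_bridge tzz (tree_edge_bridge tzz) c; rewrite dist0; lia.
by have := dist_across_bridge tzz (negbT c) (connect0 _ z); rewrite dist0; lia.
Qed.

Lemma dist_edgeS r z z' : t z z' -> d r z' = (d r z).+1 \/ d r z = (d r z').+1.
Proof.
move=> tzz; have := dist_edge_neq r tzz.
have := dist_triangle tconn r z z'; have := dist_triangle tconn r z' z.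
have := dist_edge tzz; have : d z' z <= 1 by apply: dist_edge; rewrite tsym.
lia.
Qed.

Lemma lower_neighbor_uniq r z w1 w2 : t z w1 -> t z w2 ->
  (d r w1).+1 = d r z -> (d r w2).+1 = d r z -> w1 = w2.
Proof.
move=> t1 t2 e1 e2; apply/eqP/negP => /negP n12.
have s1 := dist_sym tsym tconn z r; have s2 := dist_sym tsym tconn w1 r.
have nrX : ~~ cut z w1 z r.
  apply/negP => c; have := dist_across_bridge t1 (tree_edge_bridge t1) c.
  rewrite dist0; lia.
have cw2 : cut z w1 z w2.
  apply: connect1; rewrite /rem_edge /= t2 eqxx /= [w2 == w1]eq_sym (negbTE n12).
  by apply/negP => /andP[/eqP zw1 _]; move: t1; rewrite -zw1 tirr.
have := dist_across_bridge t1 nrX cw2.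
have : d z w2 != 0.
  by apply/negP => /eqP/(dist_eq0 tconn) zw2; move: t2; rewrite -zw2 tirr.
lia.
Qed.

Lemma exists_lower_neighbor r z : z != r -> exists w, t w z && ((d r w).+1 == d r z).
Proof.
move=> zr; have [p [pp pl ps]] := dist_shortest_path tconn r z.
case/lastP: p pp pl ps => [|q y] pp pl ps; first by rewrite -pl eqxx in zr.
rewrite last_rcons in pl; rewrite -pl in pp ps *; rewrite size_rcons in ps.
move: pp; rewrite rcons_path => /andP[pq tq].
move ew : (last r q) tq => w tq; exists w; rewrite tq /=.
have := dist_le_size pq ew; have := dist_triangle tconn r w y.
have := dist_edge tq; lia.
Qed.

Variable r : V.

Definition parent z :=
  if [pick w | t w z && ((d r w).+1 == d r z)] is Some w then w else z.

Lemma parentP z : z != r -> t (parent z) z /\ (d r (parent z)).+1 = d r z.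
Proof.
move=> zr; rewrite /parent; case: pickP => [w /andP[tw /eqP e] //|].
by have [w hw] := exists_lower_neighbor zr => /(_ w); rewrite hw.
Qed.

Fixpoint parent_chain n z :=
  if n is n'.+1 then rcons (parent_chain n' (parent z)) z else [::].

(* The vertices of the path from r to z, excluding r itself. *)
Definition root_path z := parent_chain (d r z) z.

Lemma size_root_path (z : V) : size (root_path z) = d r z.
Proof.
rewrite /root_path; move: (d r z) => n.
by elim: n z => //= n IH z; rewrite size_rcons IH.
Qed.

Lemma root_path_root : root_path r = [::].
Proof. by rewrite /root_path dist0. Qed.

Lemma root_path_parent z : z != r -> root_path z = rcons (root_path (parent z)) z.
Proof. by move=> zr; have [_ e] := parentP zr; rewrite /root_path -e. Qed.

Lemma last_root_path z : last r (root_path z) = z.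
Proof.
have [->|zr] := eqVneq z r; first by rewrite root_path_root.
by rewrite root_path_parent // last_rcons.
Qed.

Lemma root_path_inj : injective root_path.
Proof. by move=> z z' e; rewrite -(last_root_path z) e last_root_path. Qed.

Lemma root_path_edge z z' : t z z' ->
  root_path z' = rcons (root_path z) z' \/ root_path z = rcons (root_path z') z.
Proof.
move=> tzz; case: (dist_edgeS r tzz) => e.
  have zr : z' != r by apply/negP => /eqP zr; move: e; rewrite zr dist0.
  have [tp ep] := parentP zr.
  left; rewrite root_path_parent //; congr (rcons (root_path _) _).
  by apply: (@lower_neighbor_uniq r z' (parent z') z) => //; rewrite tsym.
have zr : z != r by apply/negP => /eqP zr; move: e; rewrite zr dist0.
have [tp ep] := parentP zr.
right; rewrite root_path_parent //; congr (rcons (root_path _) _).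
by apply: (@lower_neighbor_uniq r z (parent z) z') => //; rewrite tsym.
Qed.

Lemma dist_le_root_path_suffix s z c :
  root_path z = root_path c ++ s -> d c z <= size s.
Proof.
elim/last_ind: s z => [|s x IH] z.
  by rewrite cats0 => /root_path_inj ->; rewrite dist0.
rewrite -rcons_cat => e.
have zr : z != r.
  by apply/negP => /eqP zr; move: e; rewrite zr root_path_root; case: (_ ++ _).
have [tp _] := parentP zr.
move: e; rewrite root_path_parent // => /rcons_inj [/IH e1 _].
have := dist_triangle tconn c (parent z) z; have := dist_edge tp.
rewrite size_rcons; lia.
Qed.

Lemma root_path_prefix z k : exists c, root_path c = take k (root_path z).
Proof.
elim: (d r z) {-2}z (leqnn (d r z)) => [|n IH] {}z hz.
  have -> : z = r by apply: (dist_eq0 tconn); rewrite dist_sym //; lia.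
  by exists r; rewrite root_path_root.
have [->|zr] := eqVneq z r; first by exists r; rewrite root_path_root.
have [_ ep] := parentP zr.
have [hk|hk] := leqP k (size (root_path (parent z))).
  have [|c hc] := IH (parent z); first by rewrite -ltnS ep.
  by exists c; rewrite hc (root_path_parent zr) -cats1 takel_cat.
by exists z; rewrite take_oversize // (root_path_parent zr) size_rcons.
Qed.

Lemma dist_root_path_le u v :
  d u v + 2 * lcp (root_path u) (root_path v) <= d r u + d r v.
Proof.
set L := lcp (root_path u) (root_path v).
have [c hc] := root_path_prefix u L.
have eu : root_path u = root_path c ++ drop L (root_path u).
  by rewrite hc cat_take_drop.
have ev : root_path v = root_path c ++ drop L (root_path v).
  by rewrite hc /L take_lcp cat_take_drop.
move: (dist_le_root_path_suffix eu) (dist_le_root_path_suffix ev).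
rewrite !size_drop !size_root_path.
have : L <= d r u by rewrite -size_root_path lcp_le_size.
have : L <= d r v by rewrite -size_root_path /L lcpC lcp_le_size.
have := dist_triangle tconn u c v; have := dist_sym tsym tconn u c.
lia.
Qed.

Lemma dist_root_path_ge u v :
  d r u + d r v <= d u v + 2 * lcp (root_path u) (root_path v).
Proof.
have [p [pp pl <-]] := dist_shortest_path tconn u v.
elim: p u pp pl => [|a p IH] z /=.
  by move=> _ ->; rewrite lcp_id size_root_path; lia.
move=> /andP[tza /IH /[apply]].
case: (root_path_edge tza) => e.
  have := size_root_path a; rewrite e size_rcons size_root_path.
  by have := lcp_rcons (root_path z) (root_path v) a; rewrite -e; lia.
have := size_root_path z; rewrite e size_rcons size_root_path.
by have := lcp_rcons (root_path a) (root_path v) z; rewrite -e; lia.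
Qed.

Lemma dist_root_path u v :
  d u v + 2 * lcp (root_path u) (root_path v) = d r u + d r v.
Proof. by apply/eqP; rewrite eqn_leq dist_root_path_le dist_root_path_ge. Qed.

End Tree.

Section ZeroHyperbolic.
Variables (T : Type) (d : T -> T -> nat) (gp : T -> T -> T -> nat).
Hypothesis d_sym : forall u v, d u v = d v u.
Hypothesis d_refl : forall u, d u u = 0.
Hypothesis gp_dist : forall x u v, d u v + 2 * gp x u v = d x u + d x v.
Hypothesis gp_ultra : forall x u v w, minn (gp x u v) (gp x v w) <= gp x u w.

Lemma gp_sym x u v : gp x u v = gp x v u.
Proof. by have := gp_dist x u v; have := gp_dist x v u; rewrite d_sym; lia. Qed.

Lemma gp_le x u v : gp x u v <= d x u.
Proof. by have := gp_ultra x u v u; have := gp_dist x u u; rewrite d_refl gp_sym; lia. Qed.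

Lemma gp_isosceles x u v w :
  gp x u v = gp x v w /\ gp x u v <= gp x u w \/
  gp x u v = gp x u w /\ gp x u v <= gp x v w \/
  gp x v w = gp x u w /\ gp x v w <= gp x u v.
Proof.
have := gp_ultra x u v w; have := gp_ultra x v w u; have := gp_ultra x w u v.
by rewrite [gp x w u]gp_sym [gp x v u]gp_sym [gp x w v]gp_sym; lia.
Qed.

Lemma gp_facts x u v :
  [/\ d u v = d v u, d u v + 2 * gp x u v = d x u + d x v,
      gp x u v <= d x u & gp x u v <= d x v].
Proof. by split; rewrite ?gp_le // gp_sym gp_le. Qed.

Definition pair_dist (p q : T * T) := d p.1 q.1 + d p.2 q.2.
Local Notation D := pair_dist.

Lemma farthest_among_four (S : pred (T * T)) h1 h2 h3 h4 :
  (forall u v, S u -> S v -> D u v <= D h1 h2) ->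
  (forall u, S u -> D u (h1.1, h2.2) <= D h3 (h1.1, h2.2)) ->
  (forall u, S u -> D u (h2.1, h1.2) <= D h4 (h2.1, h1.2)) ->
  S h1 -> S h2 -> S h3 -> S h4 -> forall q h, S h ->
  [\/ D q h <= D q h1, D q h <= D q h2, D q h <= D q h3 | D q h <= D q h4].
Proof.
case: h1 h2 h3 h4 => [a1 b1] [a2 b2] [a3 b3] [a4 b4].
move=> diam far3 far4 S1 S2 S3 S4 [x y] [a b] Sh; rewrite /D /=.
have := diam _ _ Sh S1; have := diam _ _ Sh S2; have := diam _ _ Sh S3.
have := diam _ _ Sh S4; have := diam _ _ S1 S3; have := diam _ _ S1 S4.
have := diam _ _ S2 S3; have := diam _ _ S2 S4; have := diam _ _ S3 S4.
have := far3 _ Sh; have := far3 _ S1; have := far3 _ S2; have := far3 _ S4.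
have := far4 _ Sh; have := far4 _ S1; have := far4 _ S2; have := far4 _ S3.
rewrite /D /= !d_refl => *.
suff : d x a + d y b <= d x a1 + d y b1 \/ d x a + d y b <= d x a2 + d y b2 \/
       d x a + d y b <= d x a3 + d y b3 \/ d x a + d y b <= d x a4 + d y b4.
  by case=> [|[|[|]]]; [constructor 1 | constructor 2 | constructor 3 | constructor 4].
(* Expressed through Gromov products at x and at y, every case below is
   linear arithmetic. *)
have [? ? ? ?] := gp_facts x a a1; have [? ? ? ?] := gp_facts y b b1.
have [? ? ? ?] := gp_facts x a a2; have [? ? ? ?] := gp_facts y b b2.
have [? ? ? ?] := gp_facts x a a3; have [? ? ? ?] := gp_facts y b b3.
have [? ? ? ?] := gp_facts x a a4; have [? ? ? ?] := gp_facts y b b4.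
have [? ? ? ?] := gp_facts x a1 a2; have [? ? ? ?] := gp_facts y b1 b2.
have [? ? ? ?] := gp_facts x a1 a3; have [? ? ? ?] := gp_facts y b1 b3.
have [? ? ? ?] := gp_facts x a1 a4; have [? ? ? ?] := gp_facts y b1 b4.
have [? ? ? ?] := gp_facts x a2 a3; have [? ? ? ?] := gp_facts y b2 b3.
have [? ? ? ?] := gp_facts x a2 a4; have [? ? ? ?] := gp_facts y b2 b4.
have [? ? ? ?] := gp_facts x a3 a4; have [? ? ? ?] := gp_facts y b3 b4.
case: (gp_isosceles x a a1 a2) => [[? ?]|[[? ?]|[? ?]]].
- case: (gp_isosceles y b b1 b2) => [[? ?]|[[? ?]|[? ?]]]; [lia|lia|].
  case: (gp_isosceles x a1 a2 a3) => [[? ?]|[[? ?]|[? ?]]]; [lia| |lia].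
  by case: (gp_isosceles y b1 b2 b3) => [[? ?]|[[? ?]|[? ?]]]; lia.
- by case: (gp_isosceles y b b1 b2) => [[? ?]|[[? ?]|[? ?]]]; lia.
- case: (gp_isosceles y b b1 b2) => [[? ?]|[[? ?]|[? ?]]]; [|lia|lia].
  case: (gp_isosceles x a1 a2 a4) => [[? ?]|[[? ?]|[? ?]]]; [|lia|lia].
  by case: (gp_isosceles y b1 b2 b4) => [[? ?]|[[? ?]|[? ?]]]; lia.
Qed.

End ZeroHyperbolic.

Lemma stretch_pair_dist (V : finType) (t : rel V) (f h : V * V) :
  symmetric t -> connected_graph t ->
  stretch t f h = pair_dist (dist t) f h + 1.
Proof.
by move=> tsym tconn; rewrite /stretch /pair_dist (dist_sym tsym tconn h.2) addnAC.
Qed.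

Lemma critical_of_max (V : finType) (g t : rel V) x0 y0 f h :
  h \in swap_edges g t x0 y0 ->
  (forall h', h' \in swap_edges g t x0 y0 -> stretch t f h' <= stretch t f h) ->
  critical g t x0 y0 f h.
Proof.
move=> hS hmax; apply/eqP; rewrite eqn_leq (leq_bigmax_cond (F := stretch t f)) //.
by apply/bigmax_leqP => h' /hmax.
Qed.

Theorem theorem1 (V : finType) (g t : rel V) :
  simple_graph g -> two_edge_connected g -> spanning_tree g t ->
  forall x0 y0 : V, t x0 y0 ->
  exists C : {set V * V},
    [/\ C \subset swap_edges g t x0 y0, #|C| <= 6 &
        forall f, f \in swap_edges g t x0 y0 ->
          exists2 h, h \in C & critical g t x0 y0 f h].
Proof.
move=> _ _ [[tsym tirr] _ tconn tacyc] x0 y0 _.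
set S := swap_edges g t x0 y0; pose D := pair_dist (dist t).
have [S0|[s0 s0S]] := set_0Vmem S.
  by exists set0; rewrite sub0set cards0; split=> // f; rewrite S0 inE.
have [[h1 h2] /andP[/= h1S h2S] diam] :=
  @arg_maxnP _ (s0, s0) [pred p | (p.1 \in S) && (p.2 \in S)] (fun p => D p.1 p.2)
             (introT andP (conj s0S s0S)).
have [h3 h3S far3] := arg_maxnP (fun h => D h (h1.1, h2.2)) s0S.
have [h4 h4S far4] := arg_maxnP (fun h => D h (h2.1, h1.2)) s0S.
exists [set h in [:: h1; h2; h3; h4]]; split.
- by apply/subsetP => h; rewrite in_set !in_cons in_nil orbF => /or4P[] /eqP ->.
- by rewrite cardsE (leq_trans (card_size _)).
move=> f fS; have [hm hmS hmax] := arg_maxnP (D f) fS.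
have := farthest_among_four (dist_sym tsym tconn) (@dist0 _ t)
  (dist_root_path tsym tirr tconn tacyc) (fun x u v w => lcp_min _ _ _)
  (S := [pred p | p \in S]) (fun u v uS vS => diam (u, v) (introT andP (conj uS vS)))
  far3 far4 h1S h2S h3S h4S f hmS.
have far_crit h : h \in S -> D f hm <= D f h -> critical g t x0 y0 f h.
  move=> hS le_h; apply: critical_of_max => // h' /hmax.
  by rewrite !stretch_pair_dist // leq_add2r => /leq_trans; apply.
by case=> far; [exists h1 | exists h2 | exists h3 | exists h4];
  rewrite ?(in_set, in_cons, eqxx, orbT) //; apply: far_crit.
Qed.
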